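(* Let $X$ be a Banach space. (a) If $X$ is $(1,k)$-$\mathrm{SQ}_1$ for some $k\in(0,1]$ (in particular, if $X$ is $(1,<1)$-$\mathrm{SQ}_{<\aleph_0}$), then the closed unit ball $B_X$ has no extreme points. (b) If $X$ is $(k,1)$-$\mathrm{SQ}_1$ for some $k\in(0,1]$ (in particular, if $X$ is $(<1,1)$-$\mathrm{SQ}_{<\aleph_0}$), then $X$ is not strictly convex.
   Context: For $r,s\in(0,1]$: $X$ is $(r,s)$-$\mathrm{SQ}_{1}$ if for every set $A\subset S_X$ with $|A|\le 1$ there exists $y\in S_X$ with $\|rx\pm sy\|\le 1$ for all $x\in A$; $X$ is $(r,s)$-$\mathrm{SQ}_{<\aleph_0}$ if the same holds for every finite $A\subset S_X$. $X$ is $(1,<1)$-$\mathrm{SQ}_{<\aleph_0}$ if it is $(1,t)$-$\mathrm{SQ}_{<\aleph_0}$ for every $t\in(0,1)$, and $(<1,1)$-$\mathrm{SQ}_{<\aleph_0}$ if it is $(t,1)$-$\mathrm{SQ}_{<\aleph_0}$ for every $t\in(0,1)$. *)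

From HB Require Import structures.
From mathcomp Require Import all_boot all_order all_algebra.
From mathcomp Require Import all_classical all_reals all_analysis.
Set Implicit Arguments. Unset Strict Implicit. Unset Printing Implicit Defensive.
Import Order.TTheory GRing.Theory Num.Theory.
Import numFieldNormedType.Exports.
Local Open Scope classical_set_scope.
Local Open Scope ring_scope.

Section Defs.
Context {R : realType} {X : normedModType R}.

Definition unit_sphere : set X := [set x | `|x| = 1].
Definition closed_unit_ball : set X := [set x | `|x| <= 1].

Definition SQ_for (adm : set X -> Prop) (r s : R) : Prop :=
  forall A : set X, A `<=` unit_sphere -> adm A ->
    exists2 y, unit_sphere y &
      forall x, A x -> `|r *: x + s *: y| <= 1 /\ `|r *: x - s *: y| <= 1.

Definition at_most_one (A : set X) : Prop := forall a b, A a -> A b -> a = b.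

Definition SQ_1 (r s : R) : Prop := SQ_for at_most_one r s.
Definition SQ_finite (r s : R) : Prop := SQ_for (@finite_set X) r s.

Definition SQ_finite_1_lt1 : Prop := forall t, 0 < t < 1 -> SQ_finite 1 t.
Definition SQ_finite_lt1_1 : Prop := forall t, 0 < t < 1 -> SQ_finite t 1.

Definition extreme_point (C : set X) (x : X) : Prop :=
  C x /\ forall (y z : X) (t : R), C y -> C z -> 0 < t < 1 ->
    x = t *: y + (1 - t) *: z -> y = z.

Definition strictly_convex : Prop :=
  forall x y : X, `|x| = 1 -> `|y| = 1 -> x <> y -> `|2^-1 *: (x + y)| < 1.

End Defs.

(* An SQ_1 witness y for a unit vector u gives the segment [r u - s y, r u + s y] inside the unit
   ball.  For r = 1 this segment is centred at u, so u is not an extreme point of the ball (points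
   of the open ball never are).  For s = 1 the vectors y + r u and y - r u are distinct, lie in the
   ball and sum to 2 y, a vector of norm 2; strict convexity forbids this. *)
From mathcomp Require Import all_boot all_order all_algebra.
From mathcomp Require Import all_classical all_reals all_analysis.
From mathcomp Require Import lra.
Import Order.TTheory GRing.Theory Num.Theory.
Import numFieldNormedType.Exports.
Local Open Scope classical_set_scope.
Local Open Scope ring_scope.

Section SQ.
Set Implicit Arguments. Unset Strict Implicit.
Context {R : realType} {X : normedModType R}.
Implicit Types (x y u v : X) (A : set X) (r s k : R).

Lemma at_most_one_finite A : at_most_one A -> finite_set A.
Proof.
move=> A1; have [->|/set0P[a Aa]] := eqVneq A set0; first exact: finite_set0.
suff -> : A = [set a] by exact: finite_set1.
by apply/seteqP; split=> [b Ab|b ->] //; exact: A1.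
Qed.

Lemma SQ_finite_SQ_1 r s : SQ_finite (X := X) r s -> SQ_1 (X := X) r s.
Proof. by move=> H A AS A1; apply: H => //; exact: at_most_one_finite. Qed.

Lemma SQ_1_sphere_nonempty r s : SQ_1 (X := X) r s -> exists y, unit_sphere y.
Proof. by move=> H; have [|//|y y1 _] := H set0; [exact: sub0set | exists y]. Qed.

Lemma SQ_1P r s u : SQ_1 (X := X) r s -> `|u| = 1 ->
  exists2 y, `|y| = 1 & `|r *: u + s *: y| <= 1 /\ `|r *: u - s *: y| <= 1.
Proof.
move=> H u1; have [|a b -> ->|y y1 Hy] // := H [set u]; first by move=> _ ->.
by exists y => //; exact: Hy.
Qed.

Lemma scaler_eq0_norm1 k u : `|u| = 1 -> (k *: u == 0) = (k == 0).
Proof. by move=> u1; rewrite scaler_eq0 -(normr_eq0 u) u1 oner_eq0 orbF. Qed.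

Lemma addrr_eq0 v : (v + v == 0) = (v == 0).
Proof. by rewrite -mulr2n -(scaler_nat 2 v) scaler_eq0 pnatr_eq0. Qed.

Lemma extreme_point_sym_eq0 (C : set X) x v :
  extreme_point C x -> C (x + v) -> C (x - v) -> v = 0.
Proof.
move=> [_ xE] Cp Cm.
have half : 0 < (2^-1 : R) < 1 by lra.
have mid : x = 2^-1 *: (x + v) + (1 - 2^-1) *: (x - v).
  have -> : 1 - 2^-1 = 2^-1 :> R by lra.
  rewrite -scalerDr addrACA subrr addr0 -mulr2n -(scaler_nat 2 x).
  by rewrite scalerA mulVf ?pnatr_eq0 // scale1r.
have /addrI/eqP := xE _ _ _ Cp Cm half mid.
by rewrite -subr_eq0 opprK addrr_eq0 => /eqP.
Qed.

Lemma open_ball_not_extreme y x :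
  `|y| = 1 -> `|x| < 1 -> ~ extreme_point closed_unit_ball x.
Proof.
move=> y1 x1 xE; set v := (1 - `|x|) *: y.
have nv : `|v| = 1 - `|x| by rewrite normrZ y1 mulr1 ger0_norm // subr_ge0 ltW.
have Cp : closed_unit_ball (x + v).
  by apply: le_trans (ler_normD _ _) _; rewrite nv addrC subrK.
have Cm : closed_unit_ball (x - v).
  by apply: le_trans (ler_normB _ _) _; rewrite nv addrC subrK.
have /eqP := extreme_point_sym_eq0 xE Cp Cm.
by rewrite scaler_eq0_norm1 // subr_eq0 eq_sym (lt_eqF x1).
Qed.

Lemma SQ_1_no_extreme_point k x :
  0 < k -> SQ_1 (X := X) 1 k -> ~ extreme_point closed_unit_ball x.
Proof.
move=> k0 H xE; have [y0 y01] := SQ_1_sphere_nonempty H.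
have [x1|x1] := eqVneq `|x| 1; last first.
  by apply: (open_ball_not_extreme y01 _ xE); rewrite lt_neqAle x1; case: xE.
have [y y1 []] := SQ_1P H x1; rewrite scale1r => Cp Cm.
have /eqP := extreme_point_sym_eq0 xE Cp Cm.
by rewrite scaler_eq0_norm1 // gt_eqF.
Qed.

Lemma norm_eq1_of_sum_ge2 x y : `|x| <= 1 -> `|y| <= 1 -> 2 <= `|x + y| -> `|x| = 1.
Proof. by move=> x1 y1 xy2; have := ler_normD x y; lra. Qed.

Lemma strictly_convex_sum_ge2 x y : strictly_convex (X := X) ->
  `|x| <= 1 -> `|y| <= 1 -> 2 <= `|x + y| -> x = y.
Proof.
move=> sc x1 y1 xy2; apply: contrapT => nxy.
have nx := norm_eq1_of_sum_ge2 x1 y1 xy2.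
have ny : `|y| = 1 by apply: norm_eq1_of_sum_ge2 y1 x1 _; rewrite addrC.
have := sc _ _ nx ny nxy; rewrite normrZ gtr0_norm ?invr_gt0 //; lra.
Qed.

Lemma SQ_1_not_strictly_convex k :
  0 < k -> SQ_1 (X := X) k 1 -> ~ strictly_convex (X := X).
Proof.
move=> k0 H sc; have [u u1] := SQ_1_sphere_nonempty H.
have [y y1 []] := SQ_1P H u1; rewrite !scale1r addrC distrC => Cp Cm.
have sum2 : 2 <= `|(y + k *: u) + (y - k *: u)|.
  have -> : (y + k *: u) + (y - k *: u) = y *+ 2 by rewrite addrACA addrN addr0.
  by rewrite normrMn y1.
have /addrI/eqP := strictly_convex_sum_ge2 sc Cp Cm sum2.
by rewrite -subr_eq0 opprK addrr_eq0 scaler_eq0_norm1 // gt_eqF.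
Qed.

End SQ.

Theorem lemma6p5 (R : realType) (X : completeNormedModType R) :
  (* (a) *)
  ((exists k : R, 0 < k <= 1 /\ @SQ_1 R X 1 k) ->
     forall x : X, ~ extreme_point closed_unit_ball x) /\
  (@SQ_finite_1_lt1 R X -> forall x : X, ~ extreme_point closed_unit_ball x) /\
  (* (b) *)
  ((exists k : R, 0 < k <= 1 /\ @SQ_1 R X k 1) -> ~ @strictly_convex R X) /\
  (@SQ_finite_lt1_1 R X -> ~ @strictly_convex R X).
Proof.
have half : 0 < (2^-1 : R) by lra.
split; [|split; [|split]].
- by move=> [k [/andP[k0 _] H]] x; exact: SQ_1_no_extreme_point k0 H.
- by move=> H x; apply: SQ_1_no_extreme_point half _; apply/SQ_finite_SQ_1/H; lra.
- by move=> [k [/andP[k0 _] H]]; exact: SQ_1_not_strictly_convex k0 H.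
- by move=> H; apply: SQ_1_not_strictly_convex half _; apply/SQ_finite_SQ_1/H; lra.
Qed.
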